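(* If $w\in\mathbb{R}^n$, $w\ge0$, is strongly bilevel feasible, then there exists an extreme point $x$ of $\mathcal{X}$ such that $x$ is bilevel feasible and $x_{\mathcal{A}_1}=w$.
   Context: Single-commodity network pricing setting: $G=(\mathcal{V},\mathcal{A})$ directed graph, arc costs $c\ge0$, nonempty tolled arc set $\mathcal{A}_1\subsetneq\mathcal{A}$, $n=|\mathcal{A}_1|$, $N$ node–arc incidence matrix, single origin $o$ and destination $d$ connected by a toll-free path, $b_o=1$, $b_d=-1$, $b_i=0$ otherwise, $\mathcal{X}=\{x\in\mathbb{R}^{\mathcal{A}}: Nx=b,\ x\ge0\}$, $x_{\mathcal{A}_1}$ the restriction of $x$ to $\mathcal{A}_1$. Let $f(t)=\min\{c^\top x+t^\top x_{\mathcal{A}_1}: x\in\mathcal{X}\}$ for $t\in\mathbb{R}^n$, $t\ge0$, $f(t)=-\infty$ otherwise, and $g(w)=\sup_{t\in\mathbb{R}^n}\{f(t)-t^\top w\}$. A vector $w\ge0$ is strongly bilevel feasible when $\{w\}$ is a reaction set, i.e. $\{w\}=\{w':(w',z)\in F\text{ for some }z\}$ for a face $F$ of $\operatorname{epi}(g)$ whose affine hull's direction space does not contain $(0,1)$. A point $x\in\mathcal{X}$ is bilevel feasible if the hyperplane $\{(t,z): z=-c^\top x-t^\top x_{\mathcal{A}_1}\}$ supports $\operatorname{epi}(-f)$ (i.e. $\operatorname{epi}(-f)$ lies in $\{z\ge -c^\top x-t^\top x_{\mathcal{A}_1}\}$ and meets the hyperplane). *)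

From HB Require Import structures.
From mathcomp Require Import all_boot all_order all_algebra.
From mathcomp Require Import boolp classical_sets reals constructive_ereal ereal.
Set Implicit Arguments. Unset Strict Implicit. Unset Printing Implicit Defensive.
Import Order.TTheory GRing.Theory Num.Theory.
Local Open Scope ring_scope.
Local Open Scope classical_set_scope.

Section Pricing.
Variables (R : realType) (V A : finType) (tail head : A -> V).

(* the tolled arcs A1, enumerated as coordinates 0..n-1 with n = #|A1| *)
Variable A1 : {set A}.
Notation n := #|A1|.

Definition dotv (t w : 'rV[R]_n) : R := \sum_(i < n) t ord0 i * w ord0 i.

Definition restrA1 (x : A -> R) : 'rV[R]_n := \row_(i < n) x (enum_val i).

Definition rhs (o d : V) (v : V) : R :=
  if v == o then 1 else if v == d then -1 else 0.

(* feasible set X = { x | N x = b, x >= 0 }, N the node-arc incidence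
   matrix (+1 at the tail, -1 at the head of each arc) *)
Definition feasX (o d : V) : set (A -> R) :=
  [set x | (forall v : V,
              \sum_(a | tail a == v) x a - \sum_(a | head a == v) x a = rhs o d v)
           /\ (forall a, 0 <= x a)].

Definition extreme_point (C : set (A -> R)) (x : A -> R) : Prop :=
  C x /\ forall (y z : A -> R) (l : R), C y -> C z -> 0 < l < 1 ->
    x = (fun a => l * y a + (1 - l) * z a) -> y = x /\ z = x.

Definition nonneg_vec (t : 'rV[R]_n) : Prop := forall i, 0 <= t ord0 i.

Definition fval (c : A -> R) (o d : V) (t : 'rV[R]_n) : \bar R :=
  if `[< nonneg_vec t >] then
    ereal_inf [set ((\sum_a c a * x a) + dotv t (restrA1 x))%:E | x in feasX o d]
  else -oo%E.

Definition gval (c : A -> R) (o d : V) (w : 'rV[R]_n) : \bar R :=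
  ereal_sup [set (fval c o d t - (dotv t w)%:E)%E | t in [set: 'rV[R]_n]].

Definition epi_g (c : A -> R) (o d : V) : set ('rV[R]_n * R) :=
  [set p | (gval c o d p.1 <= p.2%:E)%E].

Definition comb (l : R) (p q : 'rV[R]_n * R) : 'rV[R]_n * R :=
  (l *: p.1 + (1 - l) *: q.1, l * p.2 + (1 - l) * q.2).

Definition is_face (C F : set ('rV[R]_n * R)) : Prop :=
  F `<=` C /\
  (forall p q l, F p -> F q -> 0 <= l <= 1 -> F (comb l p q)) /\
  (forall p q l, C p -> C q -> 0 < l < 1 -> F (comb l p q) -> F p /\ F q).

(* (0,1) lies in the direction space of aff(F), i.e. the linear span of
   { p - q : p, q in F } *)
Definition vertical_in_dir (F : set ('rV[R]_n * R)) : Prop :=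
  exists s : seq (R * (('rV[R]_n * R) * ('rV[R]_n * R))),
    (forall k, k \in s -> F k.2.1 /\ F k.2.2) /\
    \sum_(k <- s) k.1 *: (k.2.1.1 - k.2.2.1) = 0 /\
    \sum_(k <- s) k.1 * (k.2.1.2 - k.2.2.2) = 1.

Definition strongly_bilevel_feasible (c : A -> R) (o d : V) (w : 'rV[R]_n) : Prop :=
  exists F : set ('rV[R]_n * R),
    is_face (epi_g c o d) F /\ ~ vertical_in_dir F /\
    [set w' | exists z, F (w', z)] = [set w].

Definition epi_negf (c : A -> R) (o d : V) : set ('rV[R]_n * R) :=
  [set p | (- fval c o d p.1 <= p.2%:E)%E].

Definition bilevel_feasible (c : A -> R) (o d : V) (x : A -> R) : Prop :=
  feasX o d x /\
  (forall p, epi_negf c o d p ->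
     - (\sum_a c a * x a) - dotv p.1 (restrA1 x) <= p.2) /\
  (exists p, epi_negf c o d p /\
     p.2 = - (\sum_a c a * x a) - dotv p.1 (restrA1 x)).

Definition tollfree_path (o d : V) (s : seq A) : Prop :=
  [/\ s != [::],
      (forall a, a \in s -> a \notin A1),
      (forall a, ohead s = Some a -> tail a = o),
      (forall a0, head (last a0 s) = d) &
      (forall i, (i.+1 < size s)%N ->
         forall a0, head (nth a0 s i) = tail (nth a0 s i.+1))].

End Pricing.

Arguments fval {R V A} tail head A1 c o d t.
Arguments gval {R V A} tail head A1 c o d w.
Arguments epi_g {R V A} tail head A1 c o d _.
Arguments epi_negf {R V A} tail head A1 c o d _.
Arguments strongly_bilevel_feasible {R V A} tail head A1 c o d w.
Arguments bilevel_feasible {R V A} tail head A1 c o d x.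
Arguments is_face {R A} A1 C F.
Arguments vertical_in_dir {R A} A1 F.

From HB Require Import structures.
From mathcomp Require Import all_boot all_order all_algebra.
From mathcomp Require Import boolp classical_sets reals constructive_ereal ereal.
From mathcomp Require Import ring lra.
Set Implicit Arguments. Unset Strict Implicit. Unset Printing Implicit Defensive.
Import Order.TTheory GRing.Theory Num.Theory.
Local Open Scope ring_scope.

(* Since c >= 0, for tolls t >= 0 the cost c x + t x_A1 is bounded below on X
   and attains its minimum f(t) at one of the finitely many vertices of X
   (descend along the line through two feasible points, shrinking the
   support).  Combined with Farkas' lemma, proved by Fourier-Motzkin
   elimination, this describes epi g as the set of points dominating a convex
   combination of the vertex images (x_A1, c x).  A non-vertical face of epi g
   projecting onto {w} is a single point (w, z), hence extreme: it must be
   the image of a vertex P, and a second application of Farkas' lemma, against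
   the vertical segment through (w, z), yields tolls t >= 0 for which P is
   optimal.  The hyperplane defined by P then supports epi(-f) at t. *)

Definition fdot (R : pzRingType) (I : finType) (a y : I -> R) : R :=
  \sum_i a i * y i.

Lemma sum_delta (R : pzRingType) (I : finType) (F : I -> R) i :
  \sum_i' (i == i')%:R * F i' = F i.
Proof.
rewrite (bigD1 i) //= eqxx mul1r big1 ?addr0 // => i' /negbTE.
by rewrite eq_sym => ->; rewrite mul0r.
Qed.

Lemma fdot_sum (R : comPzRingType) (I T : finType) (a : I -> R) (lam : T -> R)
    (xs : T -> I -> R) :
  fdot a (fun i => \sum_Q lam Q * xs Q i) = \sum_Q lam Q * fdot a (xs Q).
Proof.
rewrite /fdot; under eq_bigr do rewrite mulr_sumr; rewrite exchange_big.
apply: eq_bigr => Q _; rewrite mulr_sumr.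
by apply: eq_bigr => i _; rewrite mulrCA.
Qed.

Lemma fdot_subc (R : comPzRingType) (I : finType) (lam F : I -> R) r :
  fdot (fun i => F i - r) lam = fdot lam F - (\sum_i lam i) * r.
Proof.
rewrite /fdot mulr_suml -sumrB.
by apply: eq_bigr => i _; rewrite mulrBl !(mulrC (lam i)).
Qed.

Lemma fdot_ge0 (R : realDomainType) (I : finType) (a y : I -> R) :
  (forall i, 0 <= a i) -> (forall i, 0 <= y i) -> 0 <= fdot a y.
Proof. by move=> a_ge0 y_ge0; apply: sumr_ge0 => i _; apply: mulr_ge0. Qed.

Section Farkas.
Variables (R : realFieldType) (I : finType).

Lemma fdot_shift (a y : I -> R) i0 u :
  fdot a (fun i => y i + (i == i0)%:R * u) = fdot a y + a i0 * u.
Proof.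
rewrite /fdot; under eq_bigr do rewrite mulrDr; rewrite big_split /=.
congr (_ + _); under eq_bigr do rewrite mulrCA eq_sym.
by rewrite sum_delta.
Qed.

Lemma separate_fin (J : finType) (P Q : pred J) (F : J -> R) :
  (forall j k, P j -> Q k -> F j <= F k) ->
  exists u, (forall j, P j -> F j <= u) /\ (forall k, Q k -> u <= F k).
Proof.
move=> PQ; case: (pickP P) => [j0 Pj0 | noP].
  case: (arg_maxP F Pj0) => jm Pjm jm_max.
  by exists (F jm); split => // k Qk; apply: PQ.
case: (pickP Q) => [k0 Qk0 | noQ]; last by exists 0; split=> [j|k]; rewrite ?noP ?noQ.
case: (arg_minP F Qk0) => km Qkm km_min.
by exists (F km); split => // j Pj; apply: PQ.
Qed.

Inductive cone (J : finType) (A : J -> I -> R) (B : J -> R) : (I -> R) -> R -> Prop :=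
| cone0 : cone A B (fun=> 0) 0
| coneZ j k : 0 <= k -> cone A B (fun i => k * A j i) (k * B j)
| coneD a1 b1 a2 b2 : cone A B a1 b1 -> cone A B a2 b2 ->
    cone A B (fun i => a1 i + a2 i) (b1 + b2).
Arguments cone0 {J A B}.
Arguments coneZ {J A B} j {k}.

Section Cone.
Variables (J : finType) (A : J -> I -> R) (B : J -> R).

Lemma cone_eq a b a' b' : cone A B a b -> a =1 a' -> b = b' -> cone A B a' b'.
Proof. by move=> + /funext <- <-. Qed.

Lemma coneZl k a b : 0 <= k -> cone A B a b -> cone A B (fun i => k * a i) (k * b).
Proof.
move=> k0; elim=> [|j k' k'0|a1 b1 a2 b2 _ IH1 _ IH2].
- by apply: cone_eq cone0 _ _ => [i|] /=; rewrite mulr0.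
- by apply: cone_eq (coneZ j (mulr_ge0 k0 k'0)) _ _ => [i|] /=; rewrite mulrA.
- by apply: cone_eq (coneD IH1 IH2) _ _ => [i|] /=; rewrite mulrDr.
Qed.

Lemma cone_trans (J' : finType) (A' : J' -> I -> R) (B' : J' -> R) a b :
  (forall j', cone A B (A' j') (B' j')) -> cone A' B' a b -> cone A B a b.
Proof.
move=> sub; elim=> [|j' k k0|a1 b1 a2 b2 _ IH1 _ IH2].
- exact: cone0.
- exact: coneZl.
- exact: coneD.
Qed.

Lemma cone_coef a b : cone A B a b ->
  exists mu : J -> R, [/\ forall j, 0 <= mu j,
    forall i, a i = \sum_j mu j * A j i & b = \sum_j mu j * B j].
Proof.
elim=> [|j k k0|a1 b1 a2 b2 _ [mu1 [mu1_ge0 a1E b1E]] _ [mu2 [mu2_ge0 a2E b2E]]].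
- by exists (fun=> 0); split=> [//|i|]; rewrite big1 // => j _; rewrite mul0r.
- exists (fun j' => (j == j')%:R * k); split=> [j'|i|]; first exact: mulr_ge0.
    by under eq_bigr do rewrite -mulrA; rewrite sum_delta.
  by under eq_bigr do rewrite -mulrA; rewrite sum_delta.
- exists (fun j => mu1 j + mu2 j); split=> [j|i|]; first exact: addr_ge0.
    by rewrite a1E a2E -big_split; apply: eq_bigr => j _; rewrite mulrDl.
  by rewrite b1E b2E -big_split; apply: eq_bigr => j _; rewrite mulrDl.
Qed.

End Cone.

Section Elimination.
Variables (J : finType) (A : J -> I -> R) (B : J -> R) (i0 : I).

(* One Fourier-Motzkin step on the variable i0: rows with a zero i0-coefficient
   are kept, each pair of rows with coefficients of opposite signs is combined
   to cancel it, and the indicator factors turn every other row into 0 <= 0. *)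
Definition elim_pair (p q : J) : bool := (0 < A p i0) && (A q i0 < 0).

Definition elimA (j : J + J * J) : I -> R :=
  match j with
  | inl j => fun i => (A j i0 == 0)%:R * A j i
  | inr (p, q) => fun i => (elim_pair p q)%:R * (A p i0 * A q i - A q i0 * A p i)
  end.

Definition elimB (j : J + J * J) : R :=
  match j with
  | inl j => (A j i0 == 0)%:R * B j
  | inr (p, q) => (elim_pair p q)%:R * (A p i0 * B q - A q i0 * B p)
  end.

Lemma elimA_supp (E : {set I}) :
  (forall j i, i \notin E -> A j i = 0) ->
  forall j i, i \notin E :\ i0 -> elimA j i = 0.
Proof.
move=> suppA j i; rewrite in_setD1 negb_and negbK => /orP [/eqP ->|iE].
  case: j => [j|[p q]] /=; last by rewrite [A p i0 * _]mulrC subrr mulr0.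
  by case: eqP => [->|_]; rewrite ?mulr0 ?mul0r.
by case: j => [j|[p q]] /=; rewrite !(suppA _ i) // !mulr0 ?subrr ?mulr0.
Qed.

Lemma elim_cone j : cone A B (elimA j) (elimB j).
Proof.
case: j => [j|[p q]] /=; first exact: coneZ (ler0n _ _).
case: (boolP (elim_pair p q)) => [/andP [Ap Aq]|_]; last first.
  by apply: cone_eq cone0 _ _ => [i|] /=; rewrite mul0r.
have Aq' : 0 <= - A q i0 by rewrite oppr_ge0 ltW.
apply: cone_eq (coneD (coneZ q (ltW Ap)) (coneZ p Aq')) _ _ => [i|] /=; ring.
Qed.

Lemma fdot_elim_pair p q y : fdot (elimA (inr (p, q))) y =
  (elim_pair p q)%:R * (A p i0 * fdot (A q) y - A q i0 * fdot (A p) y).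
Proof.
rewrite /fdot !mulr_sumr -sumrB mulr_sumr; apply: eq_bigr => i _ /=; ring.
Qed.

Lemma elim_lift y : (forall j, fdot (elimA j) y <= elimB j) ->
  exists u, forall j, fdot (A j) (fun i => y i + (i == i0)%:R * u) <= B j.
Proof.
move=> y_sol; pose slack j := B j - fdot (A j) y.
have pair_sep q p : A q i0 < 0 -> 0 < A p i0 ->
    slack q / A q i0 <= slack p / A p i0.
  move=> Aq Ap; have := y_sol (inr (p, q)).
  rewrite fdot_elim_pair /= /elim_pair Ap Aq !mul1r => sol_pq.
  rewrite ler_ndivrMr // mulrAC ler_pdivrMr // /slack; lra.
have [u [u_lo u_hi]] := separate_fin (P := fun j => A j i0 < 0)
  (Q := fun j => 0 < A j i0) (F := fun j => slack j / A j i0) pair_sep.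
exists u => j; rewrite fdot_shift -lerBrDl -/(slack j).
case: (ltrgtP (A j i0) 0) => Aj.
- by rewrite mulrC -ler_ndivrMr // u_lo.
- by rewrite mulrC -ler_pdivlMr // u_hi.
- rewrite Aj mul0r subr_ge0; have := y_sol (inl j); rewrite /= Aj eqxx mul1r.
  by rewrite /fdot; under eq_bigr do rewrite mul1r.
Qed.

End Elimination.

Lemma farkas_on (E : {set I}) (J : finType) (A : J -> I -> R) (B : J -> R) :
  (forall j i, i \notin E -> A j i = 0) ->
  (exists y, forall j, fdot (A j) y <= B j) \/
  (exists2 b, b < 0 & cone A B (fun=> 0) b).
Proof.
have [m] := ubnP #|E|; elim: m => // m IH in E J A B *; rewrite ltnS => E_le suppA.
have [E0|[i0 Ei0]] := set_0Vmem E.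
  have A0 j i : A j i = 0 by rewrite suppA ?E0 ?inE.
  case: (pselect (exists j, B j < 0)) => [[j Bj]|B_ge0].
    right; exists (B j) => //.
    by apply: cone_eq (coneZ j ler01) _ _ => [i|] /=; rewrite mul1r ?A0.
  left; exists (fun=> 0) => j; rewrite /fdot big1 => [|i _]; last by rewrite mulr0.
  by rewrite leNgt; apply/negP => Bj; apply: B_ge0; exists j.
have E'_lt : (#|E :\ i0| < m)%N by move: E_le; rewrite (cardsD1 i0 E) Ei0.
have [[y /elim_lift [u sol]]|[b b_lt0 cone_b]] :=
  IH _ _ (elimA A i0) (elimB A B i0) E'_lt (elimA_supp (i0 := i0) suppA).
  by left; exists (fun i => y i + (i == i0)%:R * u).
by right; exists b => //; apply: cone_trans cone_b; apply: elim_cone.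
Qed.

Lemma farkas (J : finType) (A : J -> I -> R) (B : J -> R) :
  (exists y, forall j, fdot (A j) y <= B j) \/
  (exists mu, [/\ forall j, 0 <= mu j, forall i, \sum_j mu j * A j i = 0
              & \sum_j mu j * B j < 0]).
Proof.
have suppA j i : i \notin [set: I]%SET -> A j i = 0 by rewrite inE.
have [sol|[b b_lt0 /cone_coef [mu [mu_ge0 A0 bE]]]] := farkas_on B suppA.
  by left.
by right; exists mu; split=> [//|i|]; rewrite -?A0 -?bE.
Qed.

Lemma farkas_nonneg (J : finType) (A : J -> I -> R) (B : J -> R) :
  (exists y, (forall i, 0 <= y i) /\ forall j, fdot (A j) y <= B j) \/
  (exists mu, [/\ forall j, 0 <= mu j, forall i, 0 <= \sum_j mu j * A j i
              & \sum_j mu j * B j < 0]).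
Proof.
pose A' (j : J + I) :=
  match j with inl j => A j | inr i' => fun i => - (i' == i)%:R end.
pose B' (j : J + I) := if j is inl j then B j else 0.
case: (farkas A' B') => [[y sol]|[mu [mu_ge0 A'0 B'_lt0]]].
  left; exists y; split=> [i|j]; last exact: sol (inl j).
  have := sol (inr i); rewrite /fdot /=.
  under eq_bigr do rewrite mulNr; rewrite sumrN sum_delta; lra.
right; exists (fun j => mu (inl j)); split=> // [i|].
  have := A'0 i; rewrite big_sumType /=.
  under [X in _ + X]eq_bigr do rewrite mulrN; rewrite sumrN.
  under [X in _ - X]eq_bigr do rewrite mulrC eq_sym; rewrite sum_delta.
  by move/eqP; rewrite subr_eq0 => /eqP ->.
move: B'_lt0; rewrite big_sumType /= [X in _ + X]big1 ?addr0 // => i _.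
by rewrite mulr0.
Qed.

End Farkas.

Section Perturbation.
Variables (R : realFieldType) (A : finType).

Lemma perturbation_room (x e : A -> R) : (forall a, 0 <= x a) ->
  (forall a, x a = 0 -> e a = 0) ->
  exists2 eps, 0 < eps & forall a, eps * `|e a| <= x a.
Proof.
move=> x_ge0 ex; pose eps := \big[Num.min/1]_(a | x a != 0) (x a / (`|e a| + 1)).
have e1_gt0 a : 0 < `|e a| + 1 by rewrite ltr_wpDl.
have eps_gt0 : 0 < eps.
  by apply: lt_bigmin => // a xa; rewrite divr_gt0 // lt0r xa x_ge0.
exists eps => // a; have [/ex ->|xa] := eqVneq (x a) 0.
  by rewrite normr0 mulr0 x_ge0.
have : eps <= x a / (`|e a| + 1) by apply: bigmin_le_cond.
rewrite ler_pdivlMr // mulrDr mulr1 => H; apply: le_trans H; rewrite lerDl ltW //.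
Qed.

Lemma ratio_test (x dir : A -> R) a0 : (forall a, 0 <= x a) -> dir a0 < 0 ->
  exists s am, [/\ 0 <= s, dir am < 0, x am + s * dir am = 0
                 & forall a, 0 <= x a + s * dir a].
Proof.
move=> x_ge0 dir_a0.
case: (arg_minP (P := fun a => dir a < 0) (fun a => x a / - dir a) dir_a0).
move=> am dir_am am_min.
have s_ge0 : 0 <= x am / - dir am by rewrite divr_ge0 // oppr_ge0 ltW.
exists (x am / - dir am), am; split=> //; first by field; rewrite lt_eqF.
move=> a; have [dir_a|dir_a] := ltP (dir a) 0.
  by have := am_min a dir_a; rewrite ler_pdivlMr ?oppr_gt0 //; lra.
exact: addr_ge0 (x_ge0 a) (mulr_ge0 s_ge0 dir_a).
Qed.

End Perturbation.

Section StandardForm.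
Variables (R : realType) (A K : finType) (M : K -> A -> R) (b : K -> R).

Definition stdpoly : set (A -> R) :=
  [set x | (forall k, fdot (M k) x = b k) /\ (forall a, 0 <= x a)].

Definition supp (x : A -> R) : {set A} := [set a | x a != 0].

Lemma supp_subset (x y : A -> R) :
  supp y \subset supp x <-> (forall a, x a = 0 -> y a = 0).
Proof.
split=> [/fintype.subsetP sub a xa|yx].
  by move: (sub a); rewrite !inE xa eqxx => /contraT /eqP.
by apply/fintype.subsetP => a; rewrite !inE; apply: contra_neq => /yx.
Qed.

Lemma stdpoly_ge0 x : stdpoly x -> forall a, 0 <= x a.
Proof. by case. Qed.

Lemma stdpoly_line x y s : stdpoly x -> stdpoly y ->
  (forall a, 0 <= x a + s * (y a - x a)) ->
  stdpoly (fun a => x a + s * (y a - x a)).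
Proof.
move=> [Mx _] [My _] ge0; split=> // k.
transitivity (fdot (M k) x + s * (fdot (M k) y - fdot (M k) x)).
  by rewrite /fdot -sumrB mulr_sumr -big_split; apply: eq_bigr => a _ /=; ring.
by rewrite Mx My subrr mulr0 addr0.
Qed.

Lemma stdpoly_conv (T : finType) (lam : T -> R) (xs : T -> A -> R) :
  (forall Q, 0 <= lam Q) -> \sum_Q lam Q = 1 -> (forall Q, stdpoly (xs Q)) ->
  stdpoly (fun a => \sum_Q lam Q * xs Q a).
Proof.
move=> lam_ge0 lam1 xsP; split=> [k|a]; last first.
  by apply: sumr_ge0 => Q _; rewrite mulr_ge0 // stdpoly_ge0.
rewrite fdot_sum.
by under eq_bigr do rewrite (proj1 (xsP _)); rewrite -mulr_suml lam1 mul1r.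
Qed.

Lemma extreme_supp x y : extreme_point stdpoly x -> stdpoly y ->
  supp y \subset supp x -> y = x.
Proof.
move=> [Px x_ext] Py /supp_subset yx; pose e a := y a - x a.
have [eps eps_gt0 room] : exists2 eps, 0 < eps & forall a, eps * `|e a| <= x a.
  by apply: perturbation_room (stdpoly_ge0 Px) _ => a xa; rewrite /e xa yx // subrr.
have side s : `|s| = eps -> stdpoly (fun a => x a + s * e a).
  move=> s_eps; apply: stdpoly_line => // a; have := room a.
  rewrite -s_eps -normrM; have := ler_norm (- (s * e a)); rewrite normrN /e; lra.
have half : 0 < (2^-1 : R) < 1 by rewrite invr_gt0 ltr0n invf_lt1 ?ltr0n ?ltr1n.
have mid : x = (fun a => 2^-1 * (x a + eps * e a) + (1 - 2^-1) * (x a + - eps * e a)).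
  by apply: funext => a; field.
have [shift _] := x_ext _ _ _ (side _ (gtr0_norm eps_gt0))
  (side _ (etrans (normrN _) (gtr0_norm eps_gt0))) half mid.
apply: funext => a; have /eqP := congr1 (fun z => z a) shift.
by rewrite addrC -subr_eq0 addrK mulf_eq0 gt_eqF //= subr_eq0 => /eqP.
Qed.

Lemma extreme_stdpolyP x : stdpoly x ->
  extreme_point stdpoly x <->
  (forall y, stdpoly y -> supp y \subset supp x -> y = x).
Proof.
move=> Px; split=> [x_ext y|uniq]; first exact: extreme_supp.
split=> // y z l Py Pz /andP [l_gt0 l_lt1] xE.
have yz0 a : x a = 0 -> y a = 0 /\ z a = 0.
  move=> xa0; have ly := mulr_ge0 (ltW l_gt0) (stdpoly_ge0 Py a).
  have lz : 0 <= (1 - l) * z a.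
    by apply: mulr_ge0 _ (stdpoly_ge0 Pz a); rewrite subr_ge0 (ltW l_lt1).
  have /esym/eqP := congr1 (fun f => f a) xE; rewrite /= xa0 paddr_eq0 //.
  rewrite !mulf_eq0 (gt_eqF l_gt0) subr_eq0 (gt_eqF l_lt1) /=.
  by case/andP => /eqP -> /eqP ->.
by split; apply: uniq; rewrite // supp_subset => a /yz0 [].
Qed.

Lemma extreme_points_finite : exists (T : finType) (v : T -> A -> R),
  (forall Q, extreme_point stdpoly (v Q)) /\
  (forall x, extreme_point stdpoly x -> exists Q, v Q = x).
Proof.
(* By extreme_supp an extreme point is determined by its support. *)
pose T := {B : {set A} | `[< exists x, extreme_point stdpoly x /\ supp x = B >]}.
pose v (Q : T) := cid (elimT (asboolP _) (valP Q)).
exists T, (fun Q => sval (v Q)); split=> [Q|x x_ext]; first by case: (svalP (v Q)).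
pose Q : T := exist _ (supp x) (asboolT (ex_intro _ x (conj x_ext erefl))).
exists Q; have [vQ_ext vQ_supp] := svalP (v Q).
by apply: extreme_supp (x_ext) (proj1 vQ_ext) _; rewrite vQ_supp.
Qed.

Section Descent.
Variable wt : A -> R.
Hypothesis wt_ge0 : forall a, 0 <= wt a.

Lemma descent_sign (e : A -> R) a1 : e a1 != 0 ->
  exists sg : R, sg * fdot wt e <= 0 /\ exists a, sg * e a < 0.
Proof.
move=> ea1; have [[a ea]|e_ge0] := pselect (exists a, e a < 0); last first.
  have {}e_ge0 a : 0 <= e a by rewrite leNgt; apply/negP => ?; apply: e_ge0; exists a.
  exists (-1); split; first by rewrite mulN1r oppr_le0 fdot_ge0.
  by exists a1; rewrite mulN1r oppr_lt0 lt0r ea1 e_ge0.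
have [cost_le0|cost_gt0] := lerP (fdot wt e) 0.
  by exists 1; split; [rewrite mul1r | exists a; rewrite mul1r].
have [[a' ea']|e_le0] := pselect (exists a, 0 < e a).
  exists (-1); split; first by rewrite mulN1r oppr_le0 ltW.
  by exists a'; rewrite mulN1r oppr_lt0.
suff : fdot wt e <= 0 by rewrite leNgt cost_gt0.
apply: sumr_le0 => a' _; apply: mulr_ge0_le0 (wt_ge0 a') _.
by rewrite leNgt; apply/negP => ?; apply: e_le0; exists a'.
Qed.

Lemma cost_descent x y : stdpoly x -> stdpoly y -> y <> x ->
  supp y \subset supp x ->
  exists2 x', stdpoly x' & fdot wt x' <= fdot wt x /\ (#|supp x'| < #|supp x|)%N.
Proof.
move=> Px Py yx /supp_subset y0; pose e a := y a - x a.
have [a1 ea1] : exists a1, e a1 != 0.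
  apply: contrapT => e0; apply: yx; apply: funext => a; apply/eqP; rewrite -subr_eq0.
  by apply: contrapT => ea; apply: e0; exists a; apply/negP.
have [sg [sg_cost [a0 sg_a0]]] := descent_sign ea1.
have [s [am [s_ge0 dir_am x'_am x'_ge0]]] :=
  ratio_test (dir := fun a => sg * e a) (stdpoly_ge0 Px) sg_a0.
pose x' a := x a + (s * sg) * (y a - x a).
have x'E a : x' a = x a + s * (sg * e a) by rewrite /x' mulrA.
exists x'; first by apply: stdpoly_line => // a; rewrite -mulrA; apply: x'_ge0.
split.
  have -> : fdot wt x' = fdot wt x + s * (sg * fdot wt e).
    by rewrite /fdot !mulr_sumr -big_split; apply: eq_bigr => a _ /=; rewrite x'E; ring.
  by rewrite gerDl mulr_ge0_le0.
have e0 a : x a = 0 -> e a = 0 by move=> xa; rewrite /e xa y0 // subrr.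
have am_supp : am \in supp x.
  by rewrite inE; apply: contraTneq dir_am => /e0 ->; rewrite mulr0 ltxx.
apply: (@leq_ltn_trans #|supp x :\ am|); last by rewrite (cardsD1 am (supp x)) am_supp.
apply/subset_leq_card/fintype.subsetP => a; rewrite !inE => x'a; apply/andP; split.
  by apply: contraNneq x'a => ->; rewrite x'E x'_am.
by apply: contraNneq x'a => xa; rewrite x'E e0 // xa !mulr0 addr0.
Qed.

Lemma extreme_le_cost x : stdpoly x ->
  exists2 x', extreme_point stdpoly x' & fdot wt x' <= fdot wt x.
Proof.
have [m] := ubnP #|supp x|; elim: m x => // m IH x; rewrite ltnS => supp_le Px.
have [x_ext|x_not_ext] := pselect (extreme_point stdpoly x); first by exists x.
have [y [Py yx y_supp]] : exists y, [/\ stdpoly y, y <> x & supp y \subset supp x].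
  apply: contrapT => no_y; apply: x_not_ext; apply/(extreme_stdpolyP Px) => y Py y_supp.
  by apply: contrapT => yx; apply: no_y; exists y.
have [x' Px' [cost_le card_lt]] := cost_descent Px Py yx y_supp.
have [x'' x''_ext cost''] := IH x' (leq_trans card_lt supp_le) Px'.
by exists x''; last exact: le_trans cost'' cost_le.
Qed.

End Descent.
End StandardForm.

Section Network.
Variables (R : realType) (V A : finType) (tail head : A -> V) (o d : V).

Definition incidence (v : V) (a : A) : R := (tail a == v)%:R - (head a == v)%:R.

Lemma feasX_stdpoly : feasX tail head o d = stdpoly incidence (rhs R o d).
Proof.
have flowE x v : \sum_(a | tail a == v) x a - \sum_(a | head a == v) x a =
    fdot (incidence v) x.
  rewrite /fdot !(big_mkcond (fun a => _ == v)) -sumrB; apply: eq_bigr => a _.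
  by rewrite /incidence mulrBl; case: eqP; case: eqP; rewrite ?mul1r ?mul0r.
by apply/seteqP; split=> x [Nx x_ge0]; split=> // v;
  [rewrite -flowE | rewrite flowE].
Qed.

End Network.

Local Open Scope classical_set_scope.

Section Bilevel.
Variables (R : realType) (V A : finType) (tail head : A -> V) (A1 : {set A})
  (c : A -> R) (o d : V).
Hypothesis c_ge0 : forall a, 0 <= c a.

Local Notation n := #|A1|.
Local Notation X := (feasX tail head o d).
Local Notation f := (fval tail head A1 c o d).
Local Notation g := (gval tail head A1 c o d).
Local Notation epi := (epi_g tail head A1 c o d).

Definition toll_cost (t : 'rV[R]_n) (x : A -> R) : R :=
  fdot c x + dotv t (restrA1 A1 x).

Definition toll_weight (t : 'rV[R]_n) (a : A) : R :=
  c a + \sum_i (enum_val i == a)%:R * t ord0 i.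

Lemma toll_costE t x : toll_cost t x = fdot (toll_weight t) x.
Proof.
rewrite /toll_cost /fdot /toll_weight; under [RHS]eq_bigr do rewrite mulrDl.
rewrite big_split /=; congr (_ + _); under eq_bigr do rewrite mulr_suml.
rewrite exchange_big /=; apply: eq_bigr => i _; rewrite mxE.
by under eq_bigr do rewrite mulrAC; rewrite -mulr_suml sum_delta mulrC.
Qed.

Lemma toll_weight_ge0 t : nonneg_vec t -> forall a, 0 <= toll_weight t a.
Proof.
move=> t_ge0 a; rewrite addr_ge0 //; apply: sumr_ge0 => i _.
exact: mulr_ge0 (ler0n _ _) (t_ge0 i).
Qed.

Lemma toll_cost_subdot t x (u : 'rV[R]_n) : toll_cost t x - dotv t u =
  fdot c x + \sum_i t ord0 i * (x (enum_val i) - u ord0 i).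
Proof.
rewrite /toll_cost /dotv -addrA -sumrB; congr (_ + _).
by apply: eq_bigr => i _; rewrite mxE mulrBr.
Qed.

Lemma fval_le t x : nonneg_vec t -> X x -> (f t <= (toll_cost t x)%:E)%E.
Proof.
move=> t_ge0 Px; rewrite /fval asboolT //.
by apply: ge_ereal_inf; exists (toll_cost t x)%:E; first exists x.
Qed.

Lemma fval_neg t : ~ nonneg_vec t -> f t = -oo%E.
Proof. by move=> t_neg; rewrite /fval asboolF. Qed.

Lemma epi_g_above x (u : 'rV[R]_n) y : X x ->
  (forall i, restrA1 A1 x ord0 i <= u ord0 i) -> fdot c x <= y -> epi (u, y).
Proof.
move=> Px xu cxy; apply: ge_ereal_sup => _ [t _ <-].
have [t_ge0|t_neg] := pselect (nonneg_vec t); last by rewrite fval_neg //= leNye.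
apply: le_trans (leeB (fval_le t_ge0 Px) (lexx _)) _.
rewrite -EFinB lee_fin toll_cost_subdot; apply: le_trans cxy; rewrite gerDl.
by apply: sumr_le0 => i _; rewrite mulr_ge0_le0 // subr_le0; move: (xu i); rewrite mxE.
Qed.

Definition comb_extreme (C : set ('rV[R]_n * R)) (p0 : 'rV[R]_n * R) : Prop :=
  forall p q l, C p -> C q -> 0 < l < 1 -> comb l p q = p0 -> p = p0.

Lemma strongly_bilevel_feasible_extreme w :
  strongly_bilevel_feasible tail head A1 c o d w ->
  exists z, epi (w, z) /\ comb_extreme epi (w, z).
Proof.
move=> [F [[F_epi [_ F_face]] [F_not_vert F_proj]]].
have F_w u y : F (u, y) -> u = w.
  move=> Fuy; have : [set w' | exists z, F (w', z)] u by exists y.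
  by rewrite F_proj.
have [z Fwz] : exists z, F (w, z).
  by have : [set w' | exists z, F (w', z)] w by rewrite F_proj.
have F_single p : F p -> p = (w, z).
  case: p => u y Fwy; have uw := F_w _ _ Fwy; subst u.
  have [-> //|yz] := eqVneq y z; case: F_not_vert.
  exists [:: ((y - z)^-1, ((w, y), (w, z)))]; split.
    by move=> k; rewrite inE => /eqP ->; split.
  by rewrite !big_seq1 /= subrr scaler0 mulVf // subr_eq0.
exists z; split; first exact: F_epi.
move=> p q l Pp Pq l01 pq; apply: F_single.
by apply: (proj1 (F_face _ _ _ Pp Pq l01 _)); rewrite pq.
Qed.

Variables (T : finType) (vtx : T -> A -> R).
Hypothesis vtx_ext : forall Q, extreme_point X (vtx Q).
Hypothesis vtx_onto : forall x, extreme_point X x -> exists Q, vtx Q = x.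

Lemma vtx_feas Q : X (vtx Q).
Proof. by case: (vtx_ext Q). Qed.

Lemma vertex_le_toll_cost t x : nonneg_vec t -> X x ->
  exists Q, toll_cost t (vtx Q) <= toll_cost t x.
Proof.
move=> t_ge0; rewrite feasX_stdpoly => Px.
have [x' + le_x'] := extreme_le_cost (toll_weight_ge0 t_ge0) Px.
rewrite -feasX_stdpoly => /vtx_onto [Q vQ].
by exists Q; rewrite !toll_costE vQ.
Qed.

Lemma fval_ge t m : nonneg_vec t -> (forall Q, m <= toll_cost t (vtx Q)) ->
  (m%:E <= f t)%E.
Proof.
move=> t_ge0 m_le; rewrite /fval asboolT //; apply: le_ereal_inf_tmp => _ [x Px <-].
have [Q le] := vertex_le_toll_cost t_ge0 Px.
by rewrite lee_fin; apply: le_trans (m_le Q) le.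
Qed.

Definition hull_above (lam : T -> R) (u : 'rV[R]_n) (y : R) :=
  [/\ forall Q, 0 <= lam Q, 0 < \sum_Q lam Q,
      forall i, \sum_Q lam Q * vtx Q (enum_val i) <= (\sum_Q lam Q) * u ord0 i
    & \sum_Q lam Q * fdot c (vtx Q) <= (\sum_Q lam Q) * y].

Lemma epi_g_of_hull lam u y : hull_above lam u y -> epi (u, y).
Proof.
move=> [lam_ge0 L_gt0 lam_u lam_y]; set L := \sum_Q lam Q in L_gt0 lam_u lam_y.
have mean F : \sum_Q lam Q / L * F Q = L^-1 * \sum_Q lam Q * F Q.
  by rewrite mulr_sumr; apply: eq_bigr => Q _; rewrite mulrAC mulrC.
pose x a := \sum_Q lam Q / L * vtx Q a.
have Px : X x.
  rewrite feasX_stdpoly; apply: stdpoly_conv => [Q||Q].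
  - exact: divr_ge0 (lam_ge0 Q) (ltW L_gt0).
  - by rewrite -mulr_suml mulfV ?gt_eqF.
  - by rewrite -feasX_stdpoly; apply: vtx_feas.
apply: (epi_g_above Px) => [i|]; first by rewrite mxE /x mean ler_pdivrMl.
by rewrite /x fdot_sum mean ler_pdivrMl.
Qed.

Lemma feasible_of_gval w z : (g w <= z%:E)%E -> exists x : A -> R, X x.
Proof.
move=> gwz; apply: contrapT => noX.
have f0 : f 0 = +oo%E.
  rewrite /fval asboolT; last by move=> i; rewrite mxE.
  rewrite (_ : [set _ | x in X] = set0) ?ereal_inf0 //.
  by apply/seteqP; split=> // y [x Px _]; apply: noX; exists x.
suff : (+oo <= g w)%E by move/le_trans/(_ gwz); rewrite leye_eq.
by apply: le_ereal_sup_tmp; exists (f 0 - (dotv 0 w)%:E)%E; [exists 0 | rewrite f0].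
Qed.

Lemma gval_le_vertex w z t : (g w <= z%:E)%E -> nonneg_vec t ->
  exists Q, toll_cost t (vtx Q) - dotv t w <= z.
Proof.
move=> gwz t_ge0; have [x0 Px0] := feasible_of_gval gwz.
have [Q0 _] := vertex_le_toll_cost t_ge0 Px0.
case: (arg_minP (P := xpredT) (fun Q => toll_cost t (vtx Q)) (isT : xpredT Q0)).
move=> Q _ Q_min; exists Q; rewrite -lee_fin EFinB; apply: le_trans gwz.
apply: (@le_trans _ _ (f t - (dotv t w)%:E)%E).
  by apply: leeB => //; apply: fval_ge => // Q'; apply: Q_min.
by apply: le_ereal_sup_tmp; exists (f t - (dotv t w)%:E)%E; first exists t.
Qed.

Lemma epi_g_unseparated w z (tau : 'I_n -> R) s nu : (g w <= z%:E)%E ->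
  (forall i, 0 <= tau i) -> 0 <= s -> 0 < nu ->
  exists Q, \sum_i tau i * (vtx Q (enum_val i) - w ord0 i)
            + s * (fdot c (vtx Q) - z) < nu.
Proof.
move=> gwz tau_ge0 s_ge0 nu_gt0.
(* eps keeps the tolls tau / (s + eps) defined when s = 0 and is small enough
   that eps * z < nu. *)
have z1_gt0 : 0 < `|z| + 1 by rewrite ltr_wpDl.
pose eps := nu / (`|z| + 1); have eps_gt0 : 0 < eps by rewrite divr_gt0.
pose sg := s + eps; have sg_gt0 : 0 < sg by rewrite ltr_wpDl.
have t_ge0 : nonneg_vec (\row_i (tau i / sg)).
  by move=> i; rewrite mxE; apply: divr_ge0 (tau_ge0 i) (ltW sg_gt0).
have [Q] := gval_le_vertex gwz t_ge0; rewrite toll_cost_subdot => HQ; exists Q.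
move: HQ; set a := fdot c (vtx Q); set S := \sum_i tau i * _.
have -> : \sum_i (\row_i (tau i / sg)) ord0 i * (vtx Q (enum_val i) - w ord0 i)
    = sg^-1 * S by rewrite /S mulr_sumr; apply: eq_bigr => i _; rewrite mxE; ring.
rewrite -lerBrDl ler_pdivrMl // /sg => HQ.
have a_ge0 : 0 <= a := fdot_ge0 c_ge0 (vtx_feas Q).2.
have eps_z : eps * z <= eps * `|z| := ler_wpM2l (ltW eps_gt0) (ler_norm z).
have eps_nu : eps * (`|z| + 1) = nu by rewrite /eps divfK ?gt_eqF.
have eps_a : 0 <= eps * a := mulr_ge0 (ltW eps_gt0) a_ge0.
lra.
Qed.

Lemma hull_of_epi_g w z : (g w <= z%:E)%E -> exists lam, hull_above lam w z.
Proof.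
(* Unknowns lam; rows: coordinates of w (inl i), the cost z (inr true) and
   the normalization \sum lam >= 1 (inr false). *)
move=> gwz.
pose Ac (j : 'I_n + bool) (Q : T) : R := match j with
  | inl i => vtx Q (enum_val i) - w ord0 i
  | inr true => fdot c (vtx Q) - z
  | inr false => -1 end.
pose Bc (j : 'I_n + bool) : R := if j is inr false then -1 else 0.
have [[lam [lam_ge0 sol]]|[mu [mu_ge0 mu_A mu_B]]] := farkas_nonneg Ac Bc.
  have L_ge1 : 1 <= \sum_Q lam Q.
    have := sol (inr false); rewrite /fdot /=.
    by under eq_bigr do rewrite mulN1r; rewrite sumrN lerN2.
  exists lam; split=> // [|i|]; first exact: lt_le_trans ltr01 L_ge1.
    by have := sol (inl i); rewrite fdot_subc subr_le0.
  by have := sol (inr true); rewrite fdot_subc subr_le0.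
have nu_gt0 : 0 < mu (inr false).
  move: mu_B; rewrite big_sumType big_bool /= big1 => [|i _]; last by rewrite mulr0.
  by rewrite mulr0 mulrN1; lra.
have [Q] := epi_g_unseparated gwz (fun i => mu_ge0 (inl i)) (mu_ge0 (inr true))
  nu_gt0.
by have := mu_A Q; rewrite big_sumType big_bool /=; lra.
Qed.

Lemma vertex_epi_g P : epi (restrA1 A1 (vtx P), fdot c (vtx P)).
Proof. exact: epi_g_above (vtx_feas P) (fun i => lexx _) (lexx _). Qed.

Lemma vertex_of_extreme w z lam : comb_extreme epi (w, z) -> hull_above lam w z ->
  exists P, restrA1 A1 (vtx P) = w /\ fdot c (vtx P) = z.
Proof.
move=> wz_ext [lam_ge0 L_gt0 lam_w lam_z].
set L := \sum_Q lam Q in L_gt0 lam_w lam_z.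
have [P /andP [_ lamP_gt0]] : exists P, true && (0 < lam P).
  by apply: psumr_neq0P => [Q _|]; [apply: lam_ge0 | apply/eqP; rewrite gt_eqF].
have lamP_le : lam P <= L.
  by rewrite /L (bigD1 P) //= lerDl sumr_ge0.
(* (w, z) splits as l (vertex image of P) + (1 - l) q, with q dominating the
   combination mu; halving lam P keeps the weights mu nonzero. *)
pose l := lam P / (2 * L).
have l01 : 0 < l < 1.
  by rewrite divr_gt0 ?mulr_gt0 //= ltr_pdivrMr ?mulr_gt0 // mul1r; lra.
have lL : l * L = lam P / 2 by rewrite /l; field; rewrite gt_eqF.
pose mu Q := lam Q - (P == Q)%:R * (lam P / 2).
have mu_sum F : \sum_Q mu Q * F Q = \sum_Q lam Q * F Q - lam P / 2 * F P.
  by rewrite /mu; under eq_bigr do rewrite mulrBl -mulrA; rewrite sumrB sum_delta.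
have muL : \sum_Q mu Q = L * (1 - l).
  by rewrite /mu sumrB -/L (sum_delta (fun=> lam P / 2)); lra.
have l1 : 1 - l != 0 by rewrite subr_eq0 eq_sym lt_eqF //; case/andP: l01.
pose q := ((1 - l)^-1 *: (w - l *: restrA1 A1 (vtx P)),
           (1 - l)^-1 * (z - l * fdot c (vtx P))).
have epi_q : epi q.
  apply: (@epi_g_of_hull mu); split=> [Q||i|]; rewrite ?mu_sum ?muL.
  - have := lam_ge0 Q; rewrite /mu; case: (eqVneq P Q) => [<-|_] /=; lra.
  - by rewrite mulr_gt0 // subr_gt0; case/andP: l01.
  - by rewrite !mxE mulrA mulfK // -lL; have := lam_w i; lra.
  - by rewrite mulrA mulfK // -lL; lra.
have PE : (restrA1 A1 (vtx P), fdot c (vtx P)) = (w, z).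
  apply: wz_ext (vertex_epi_g P) epi_q l01 _; rewrite /comb /q /=.
  by congr pair; [apply/rowP => i; rewrite !mxE |]; field.
by exists P; case: PE => -> ->.
Qed.

Lemma price_of_extreme w z : comb_extreme epi (w, z) ->
  exists2 t, nonneg_vec t & forall Q, z + dotv t w <= toll_cost t (vtx Q).
Proof.
move=> wz_ext.
pose Ac (Q : T) (i : 'I_n) := w ord0 i - vtx Q (enum_val i).
pose Bc (Q : T) := fdot c (vtx Q) - z.
have [[y [y_ge0 sol]]|[m [m_ge0 m_A m_B]]] := farkas_nonneg Ac Bc.
  exists (\row_i y i) => [i|Q]; first by rewrite mxE.
  rewrite -lerBrDr toll_cost_subdot; have := sol Q; rewrite /Bc.
  have -> : \sum_i (\row_i y i) ord0 i * (vtx Q (enum_val i) - w ord0 i) =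
      - fdot (Ac Q) y by rewrite -sumrN; apply: eq_bigr => i _; rewrite mxE /Ac; ring.
  lra.
exfalso; set L := \sum_Q m Q.
have m_w i : \sum_Q m Q * vtx Q (enum_val i) <= L * w ord0 i.
  move: (m_A i); rewrite /Ac; under eq_bigr do rewrite mulrBr.
  by rewrite sumrB -mulr_suml subr_ge0.
have m_z : \sum_Q m Q * fdot c (vtx Q) = L * z + \sum_Q m Q * Bc Q.
  rewrite /Bc; under [X in _ = _ + X]eq_bigr do rewrite mulrBr.
  by rewrite sumrB -mulr_suml -/L addrC subrK.
have L_gt0 : 0 < L.
  rewrite lt_def sumr_ge0 // andbT; apply: contraTneq m_B => /psumr_eq0P m0.
  by rewrite big1 ?ltxx // => Q _; rewrite m0 ?mul0r.
pose del := - (\sum_Q m Q * Bc Q) / L.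
have del_gt0 : 0 < del by rewrite divr_gt0 // oppr_gt0.
have m_Bc : \sum_Q m Q * Bc Q = - (del * L) by rewrite /del divfK ?gt_eqF // opprK.
have vert s : `|s| = del -> epi (w, z + s).
  move=> s_del; apply: (@epi_g_of_hull m); split=> //.
  rewrite m_z m_Bc mulrDr lerD2l -mulNr [L * s]mulrC ler_pM2r //.
  by have := ler_norm (- s); rewrite normrN s_del; lra.
have half : 0 < (2^-1 : R) < 1 by rewrite invr_gt0 ltr0n invf_lt1 ?ltr0n ?ltr1n.
have /(congr1 snd) /= : (w, z + del) = (w, z).
  apply: wz_ext (vert _ (gtr0_norm del_gt0))
    (vert _ (etrans (normrN _) (gtr0_norm del_gt0))) half _.
  by rewrite /comb /=; congr pair; [apply/rowP => i; rewrite !mxE |]; field.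
lra.
Qed.

Lemma bilevel_feasible_of_optimal x t : X x -> nonneg_vec t ->
  (forall Q, toll_cost t x <= toll_cost t (vtx Q)) ->
  bilevel_feasible tail head A1 c o d x.
Proof.
move=> Px t_ge0 x_opt; split=> //; split.
  case=> t' y; rewrite /epi_negf /=.
  have [t'_ge0|t'_neg] := pselect (nonneg_vec t'); last by rewrite fval_neg.
  move=> fy; rewrite -lee_fin; apply: le_trans fy.
  by rewrite -opprD EFinN leeN2; apply: fval_le.
exists (t, - (\sum_a c a * x a) - dotv t (restrA1 A1 x)); split=> //.
by rewrite /epi_negf /= -opprD EFinN leeN2; apply: fval_ge.
Qed.

Lemma strongly_bilevel_feasible_vertex w :
  strongly_bilevel_feasible tail head A1 c o d w ->
  exists x : A -> R, extreme_point X x /\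
    bilevel_feasible tail head A1 c o d x /\ restrA1 A1 x = w.
Proof.
move=> /strongly_bilevel_feasible_extreme [z [epi_wz wz_ext]].
have [lam hull] := hull_of_epi_g epi_wz.
have [P [bP aP]] := vertex_of_extreme wz_ext hull.
have [t t_ge0 t_opt] := price_of_extreme wz_ext.
exists (vtx P); split=> //; split=> //.
apply: bilevel_feasible_of_optimal (vtx_feas P) t_ge0 _ => Q.
by rewrite /toll_cost aP bP; apply: t_opt.
Qed.

End Bilevel.

Theorem proposition4 (R : realType) (V A : finType) (tail head : A -> V)
  (A1 : {set A}) (c : A -> R) (o d : V) (w : 'rV[R]_#|A1|) :
  injective (fun a => (tail a, head a)) ->
  (forall a, 0 <= c a) ->
  (0 < #|A1| < #|A|)%N ->
  o != d ->
  (exists s, tollfree_path tail head A1 o d s) ->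
  (forall i, 0 <= w ord0 i) ->
  strongly_bilevel_feasible tail head A1 c o d w ->
  exists x : A -> R,
    extreme_point (feasX tail head o d) x /\
    bilevel_feasible tail head A1 c o d x /\
    restrA1 A1 x = w.
Proof.
move=> _ c_ge0 _ _ _ _ sbf.
have [T [vtx [vtx_ext vtx_onto]]] :=
  extreme_points_finite (@incidence R _ _ tail head) (rhs R o d).
rewrite -feasX_stdpoly in vtx_ext vtx_onto.
exact: (strongly_bilevel_feasible_vertex c_ge0 vtx_ext vtx_onto sbf).
Qed.
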